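(* (1) There exists a minimal monad on $\mathbb{P}^3$ of the form $$\mathcal{O}(-5)\oplus\mathcal{O}(-3)\xrightarrow{\alpha}\mathcal{O}(3)\oplus\mathcal{O}(1)^{\oplus2}\oplus\mathcal{O}(-2)^{\oplus2}\oplus\mathcal{O}(-4)\xrightarrow{\beta}\mathcal{O}(4)\oplus\mathcal{O}(2)$$ (i.e. $\boldsymbol{a}=(4,2)$, $\boldsymbol{b}=(3,1,1)$). (2) There exists a minimal monad on $\mathbb{P}^3$ of the form $$\mathcal{O}(-4)^{\oplus2}\xrightarrow{\alpha}\mathcal{O}(2)^{\oplus2}\oplus\mathcal{O}(1)\oplus\mathcal{O}(-2)\oplus\mathcal{O}(-3)^{\oplus2}\xrightarrow{\beta}\mathcal{O}(3)^{\oplus2}$$ (i.e. $\boldsymbol{a}=(3,3)$, $\boldsymbol{b}=(2,2,1)$).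
   Context: Work on $\mathbb{P}^3$ over an algebraically closed field; $\mathcal{O}=\mathcal{O}_{\mathbb{P}^3}$. A monad is a complex $\mathcal{C}\xrightarrow{\alpha}\mathcal{B}\xrightarrow{\beta}\mathcal{A}$ of vector bundles (so $\beta\circ\alpha=0$) with $\alpha$ injective and $\beta$ surjective; it is minimal if no entry of the matrices of $\alpha$ and $\beta$, as homogeneous forms, is a nonzero constant. *)

From HB Require Import structures.
From mathcomp Require Import all_boot all_order all_algebra.
From mathcomp Require Import mpoly.
Set Implicit Arguments. Unset Strict Implicit. Unset Printing Implicit Defensive.
Import Order.TTheory GRing.Theory Num.Theory.
Local Open Scope ring_scope.

(* Homogeneous coordinate ring of P^3 over k: k[x_0,x_1,x_2,x_3]. *)
Notation S3 k := {mpoly k[4]}.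

(* [p] is a homogeneous form of degree [d] (d an integer);
   a form of negative degree is 0 (Hom(O(e),O(e')) = H^0(O(e'-e))). *)
Definition homog_of_deg (k : closedFieldType) (d : int) (p : S3 k) : Prop :=
  if (0 <= d)%R then p \is (absz d).-homog else (p == 0).

Definition nonzero_const (k : closedFieldType) (p : S3 k) : Prop :=
  exists c : k, c != 0 /\ p = c%:MP.

(* Points of P^3: nonzero vectors of k^4 (homogeneous coordinates). *)
Definition nonzero_pt (k : closedFieldType) (x : 'I_4 -> k) : Prop :=
  exists i, x i != 0.

(* Evaluation of a matrix of forms at a point (the fibre map). *)
Definition eval_mx (k : closedFieldType) m n (x : 'I_4 -> k)
  (M : 'M[S3 k]_(m, n)) : 'M[k]_(m, n) := map_mx (meval x) M.

(* A morphism  \oplus_j O(src_j) -> \oplus_i O(tgt_i)  is a matrix whose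
   (i,j) entry is a form of degree tgt_i - src_j. *)
Definition is_morphism (k : closedFieldType) (src tgt : seq int)
  (M : 'M[S3 k]_(size tgt, size src)) : Prop :=
  forall (i : 'I_(size tgt)) (j : 'I_(size src)),
    homog_of_deg (tgt`_i - src`_j) (M i j).
Arguments is_morphism {k} src tgt M.

(* Minimal monad
     C = \oplus O(c_j) --alpha--> B = \oplus O(b_i) --beta--> A = \oplus O(a_l)
   on P^3: beta o alpha = 0, alpha injective (fibrewise, i.e. as a morphism of
   vector bundles), beta surjective (fibrewise), and no entry of alpha, beta
   is a nonzero constant. *)
Definition minimal_monad (k : closedFieldType) (c b a : seq int)
  (alpha : 'M[S3 k]_(size b, size c)) (beta : 'M[S3 k]_(size a, size b)) : Prop :=
  [/\ is_morphism c b alpha /\ is_morphism b a beta,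
      beta *m alpha = 0,
      (forall x, nonzero_pt x -> \rank (eval_mx x alpha) = size c),
      (forall x, nonzero_pt x -> \rank (eval_mx x beta) = size a) &
      ((forall i j, ~ nonzero_const (alpha i j)) /\
       (forall i j, ~ nonzero_const (beta i j)))].

Definition exists_minimal_monad (k : closedFieldType) (c b a : seq int) : Prop :=
  exists (alpha : 'M[S3 k]_(size b, size c)) (beta : 'M[S3 k]_(size a, size b)),
    minimal_monad alpha beta.

From mathcomp Require Import all_boot all_order all_algebra.
From mathcomp Require Import mpoly.
From mathcomp Require Import ring zify.
Set Implicit Arguments. Unset Strict Implicit. Unset Printing Implicit Defensive.
Import GRing.Theory.
Local Open Scope ring_scope.

(* Both monads are self-dual: B is identified with B^v(-1) by a symplectic form
   J, C = A^v(-1), and alpha := J beta^T. Then beta alpha = beta J beta^T is an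
   alternating 2x2 matrix, so it vanishes as soon as one entry does, and since J
   is invertible alpha is injective exactly where beta is surjective.
   Surjectivity of beta is checked on the strata {x <> 0}, {x = 0, y <> 0}, ...
   of P^3, on each of which some 2x2 minor of beta is a power of the nonzero
   coordinate. Minimality holds because no degree of A occurs among those of B,
   so all entries of beta, hence of alpha, are forms of nonzero degree. *)

Section SymplecticDual.
Variables (n : nat) (p : 'I_n -> 'I_n) (s : pred 'I_n).

(* With [p] the pairing O(b_i) <-> O(-1-b_i) of the summands of B and [s] the
   signs of the symplectic form J, [sdual beta] is J beta^T, the dual of beta
   twisted by O(-1). *)
Definition sdual (R : pzRingType) m (B : 'M[R]_(m, n)) : 'M[R]_(n, m) :=
  \matrix_(i, j) ((-1) ^+ s i * B j (p i)).

Lemma map_sdual (R R' : pzRingType) (f : {rmorphism R -> R'}) m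
    (B : 'M[R]_(m, n)) :
  map_mx f (sdual B) = sdual (map_mx f B).
Proof. by apply/matrixP=> i j; rewrite !mxE rmorphM rmorph_sign. Qed.

Lemma sdualE (R : pzRingType) m (B : 'M[R]_(m, n)) :
  sdual B = diag_mx (\row_i (-1) ^+ s i) *m rowsub p B^T.
Proof. by rewrite mul_diag_mx; apply/matrixP=> i j; rewrite !mxE. Qed.

Hypotheses (pK : involutive p) (s_p : forall i, s (p i) = ~~ s i).

Lemma mxrank_rowsub_involutive (F : fieldType) m (A : 'M[F]_(n, m)) :
  \rank (rowsub p A) = \rank A.
Proof.
have ppA : rowsub p (rowsub p A) = A by apply/matrixP=> i j; rewrite !mxE pK.
apply/eqP; rewrite eqn_leq mxrankS ?rowsub_sub //=.
by rewrite -{1}ppA mxrankS ?rowsub_sub.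
Qed.

Lemma mxrank_sdual (F : fieldType) m (B : 'M[F]_(m, n)) :
  \rank (sdual B) = \rank B.
Proof.
have signs_full : row_full (diag_mx (\row_i (-1) ^+ s i : 'rV[F]_n)).
  rewrite row_full_unit unitmxE det_diag unitr_prod // => i _.
  by rewrite mxE unitrX ?unitrN1.
by rewrite sdualE (eqmxMfull _ signs_full) mxrank_rowsub_involutive mxrank_tr.
Qed.

Lemma sum_involution_opp (V : zmodType) (F G : 'I_n -> V) :
  (forall i, G (p i) = - F i) -> \sum_i G i = - \sum_i F i.
Proof.
by move=> GF; rewrite (reindex_inj (inv_inj pK)) -sumrN; apply: eq_bigr.
Qed.

Lemma sum_involution_odd (V : zmodType) (F : 'I_n -> V) :
  (forall i, F (p i) = - F i) -> \sum_i F i = 0.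
Proof.
move=> Fp; rewrite (bigID s) /= [X in _ + X](reindex_inj (inv_inj pK)) /=.
rewrite (eq_bigl s) => [|i]; last by rewrite s_p negbK.
by rewrite -big_split big1 //= => i _; rewrite Fp subrr.
Qed.

Lemma mulmx_sdual_skew (R : comPzRingType) m (B : 'M[R]_(m, n)) l j :
  (B *m sdual B) j l = - (B *m sdual B) l j.
Proof.
rewrite !mxE; apply: sum_involution_opp => i.
by rewrite !mxE s_p pK signrN; ring.
Qed.

Lemma mulmx_sdual_diag (R : comPzRingType) m (B : 'M[R]_(m, n)) l :
  (B *m sdual B) l l = 0.
Proof.
rewrite mxE; apply: sum_involution_odd => i.
by rewrite !mxE s_p pK signrN; ring.
Qed.

Lemma mulmx_sdual_eq0 (R : comPzRingType) (B : 'M[R]_(2, n)) :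
  (B *m sdual B) 0 1 = 0 -> B *m sdual B = 0.
Proof.
have ord2 (i : 'I_2) : i = 0 \/ i = 1.
  by case: i => [[|[|//]] ?]; [left | right]; apply: val_inj.
move=> B01; apply/matrixP=> l j; rewrite [RHS]mxE.
case: (ord2 l) (ord2 j) => -> [] ->; rewrite ?mulmx_sdual_diag //.
by rewrite mulmx_sdual_skew B01 oppr0.
Qed.

End SymplecticDual.

Lemma det_mx2 (R : comPzRingType) (A : 'M[R]_2) :
  \det A = A 0 0 * A 1 1 - A 0 1 * A 1 0.
Proof.
rewrite (expand_det_row _ 0) !big_ord_recl big_ord0 /cofactor !det_mx11 !mxE /=.
have -> : lift 0 (0 : 'I_1) = 1 :> 'I_2 by apply: val_inj.
have -> : lift 1 (0 : 'I_1) = 0 :> 'I_2 by apply: val_inj.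
by rewrite expr0 expr1 mul1r mulN1r addr0 mulrN.
Qed.

Lemma mxrank_minor2 (F : fieldType) n (A : 'M[F]_(2, n)) (i j : 'I_n) :
  A 0 i * A 1 j - A 0 j * A 1 i != 0 -> \rank A = 2%N.
Proof.
move=> minor_neq0; apply/eqP; rewrite eqn_leq rank_leq_row /=.
pose f (t : 'I_2) := if t == 0 then i else j.
pose C := colsub f A.
have C_unit : C \in unitmx by rewrite unitmxE unitfE det_mx2 !mxE.
have C_sub : (C^T <= A^T)%MS.
  have -> : C^T = rowsub f A^T.
    by apply/matrixP=> u v; rewrite !mxE.
  exact: rowsub_sub.
by have := mxrankS C_sub; rewrite !mxrank_tr (mxrank_unit C_unit).
Qed.

Section Monads.
Variable k : closedFieldType.

Lemma dhomogM_deg d e f (p q : S3 k) :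
  p \is d.-homog -> q \is e.-homog -> (d + e)%N = f -> p * q \is f.-homog.
Proof. by move=> hp hq <-; apply: dhomogM. Qed.

Lemma dhomogXn_deg d f (p : S3 k) n :
  p \is d.-homog -> (d * n)%N = f -> p ^+ n \is f.-homog.
Proof. by move=> hp <-; apply: dhomogMn. Qed.

Lemma homog_of_deg_sign d (e : bool) (q : S3 k) :
  homog_of_deg d q -> homog_of_deg d ((-1) ^+ e * q).
Proof.
case: e; rewrite ?expr0 ?mul1r // expr1 mulN1r /homog_of_deg.
by case: ifP; rewrite ?dhomogN ?oppr_eq0.
Qed.

Lemma homog_nonconst d (q : S3 k) :
  homog_of_deg d q -> d != 0 -> ~ nonzero_const q.
Proof.
move=> + d_neq0 [c [c_neq0 qc]]; rewrite {}qc /homog_of_deg.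
case: ifP => _; last by rewrite mpolyC_eq0 (negbTE c_neq0).
have hc0 : (c%:MP : S3 k) \is 0.-homog.
  by rewrite -[_%:MP]mulr1 mul_mpolyC dhomogZ ?dhomog1.
move/(dhomog_uniq _ hc0); rewrite mpolyC_eq0 => /(_ c_neq0)/eqP.
by rewrite eq_sym absz_eq0 (negbTE d_neq0).
Qed.

Lemma nonconst_sign (e : bool) (q : S3 k) :
  ~ nonzero_const q -> ~ nonzero_const ((-1) ^+ e * q).
Proof.
case: e; rewrite ?expr0 ?mul1r // expr1 mulN1r => q_nc [c [c_neq0 qc]].
by apply: q_nc; exists (- c); rewrite oppr_eq0 mpolyCN -qc opprK.
Qed.

Lemma is_morphism_nonconst (src tgt : seq int)
    (M : 'M[S3 k]_(size tgt, size src)) :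
  is_morphism src tgt M -> all (fun t => t \notin src) tgt ->
  forall i j, ~ nonzero_const (M i j).
Proof.
move=> M_mor /allP gaps i j; apply: homog_nonconst (M_mor i j) _.
rewrite subr_eq0; apply: contraTneq (gaps _ (mem_nth 0 (ltn_ord i))) => ->.
by rewrite negbK mem_nth.
Qed.

Lemma homog_sdual m n (p : 'I_n -> 'I_n) (s : pred 'I_n) (a b c : seq int)
    (beta : 'M[S3 k]_(m, n)) :
  (forall (l : 'I_m) (i : 'I_n), homog_of_deg (a`_l - b`_i) (beta l i)) ->
  (forall i : 'I_n, b`_i + b`_(p i) = -1) ->
  (forall l : 'I_m, a`_l + c`_l = -1) ->
  forall (i : 'I_n) (l : 'I_m), homog_of_deg (b`_i - c`_l) (sdual p s beta i l).
Proof.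
move=> beta_homog dual_b dual_a i l; rewrite mxE; apply: homog_of_deg_sign.
have -> : b`_i - c`_l = a`_l - b`_(p i).
  by have := dual_b i; have := dual_a l; lia.
exact: beta_homog.
Qed.

Lemma nonzero_pt_cases (v : 'I_4 -> k) : nonzero_pt v ->
  [\/ v 0 != 0, v 0 = 0 /\ v 1 != 0, [/\ v 0 = 0, v 1 = 0 & v 2 != 0]
    | [/\ v 0 = 0, v 1 = 0, v 2 = 0 & v 3 != 0]].
Proof.
case=> i vi_neq0.
have [v0|] := eqVneq (v 0) 0; last by constructor 1.
have [v1|] := eqVneq (v 1) 0; last by constructor 2.
have [v2|] := eqVneq (v 2) 0; last by constructor 3.
constructor 4; split=> //; apply: contraNneq vi_neq0 => v3.
by case: i => [[|[|[|[|//]]]] ?];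
  [rewrite -v0 | rewrite -v1 | rewrite -v2 | rewrite -v3];
  apply/eqP; congr (v _); apply: val_inj.
Qed.

Lemma exists_minimal_monad_sdual (a0 a1 c0 c1 : int) (b : seq int)
    (p : 'I_(size b) -> 'I_(size b)) (s : pred 'I_(size b))
    (beta : 'M[S3 k]_(2, size b)) :
  involutive p -> (forall i, s (p i) = ~~ s i) ->
  (forall i : 'I_(size b), b`_i + b`_(p i) = -1) ->
  a0 + c0 = -1 -> a1 + c1 = -1 ->
  is_morphism b [:: a0; a1] beta -> all (fun t => t \notin b) [:: a0; a1] ->
  (beta *m sdual p s beta) 0 1 = 0 ->
  (forall v, nonzero_pt v -> \rank (eval_mx v beta) = 2%N) ->
  exists_minimal_monad k [:: c0; c1] b [:: a0; a1].
Proof.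
move=> pK s_p dual_b dual_a0 dual_a1 beta_mor beta_gaps beta_cross beta_rank.
have alpha_mor : is_morphism [:: c0; c1] b (sdual p s beta).
  by apply: homog_sdual beta_mor dual_b _ => -[[|[|//]] ?].
exists (sdual p s beta), beta; split=> //.
- exact: mulmx_sdual_eq0.
- by move=> v /beta_rank; rewrite /eval_mx map_sdual mxrank_sdual.
- have beta_nc := is_morphism_nonconst beta_mor beta_gaps.
  by split=> i j //; rewrite mxE; apply: nonconst_sign.
Qed.

End Monads.

Section Examples.
Variable k : closedFieldType.

Ltac solve_homog :=
  lazymatch goal with
  | |- is_true (_ * _ \in _) =>
      eapply dhomogM_deg; [solve_homog | solve_homog | reflexivity]
  | |- is_true (_ ^+ _ \in _) =>
      eapply dhomogXn_deg; [solve_homog | reflexivity]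
  | |- is_true (_ + _ \in _) => apply: dhomogD; solve_homog
  | |- is_true (- _ \in _) => rewrite dhomogN; solve_homog
  | |- _ => first [by rewrite dhomogX /= mdeg1 | exact: dhomog0]
  end.

(* On the stratum cut out by the hypotheses [_ = 0] in context, the minor of
   columns [i], [j] reduces to the power of a coordinate [m]. *)
Ltac rank2_by_minor i j m :=
  apply: (@mxrank_minor2 _ _ _ (@Ordinal 6 i isT) (@Ordinal 6 j isT));
  rewrite /eval_mx !mxE /=
    !(mevalM, mevalN, mevalD, mevalB, mevalXU, meval0, rmorphXn);
  repeat match goal with H : _ = 0 |- _ => rewrite H; clear H end;
  rewrite (_ : _ - _ = m); [rewrite ?oppr_eq0 expf_neq0 // | ring].

Local Notation x := ('X_0 : S3 k).
Local Notation y := ('X_1 : S3 k).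
Local Notation z := ('X_2 : S3 k).
Local Notation w := ('X_3 : S3 k).

Definition mx_of_seqs m n (L : seq (seq (S3 k))) : 'M[S3 k]_(m, n) :=
  \matrix_(i, j) nth 0 (nth [::] L i) j.

Definition beta42 := mx_of_seqs 2 6
  [:: [:: x; x * w ^+ 2; y ^+ 3; w ^+ 6; y ^+ 2 * z ^+ 4; z ^+ 8];
      [:: 0; y; x; z ^+ 4; w ^+ 4; 0]].

Definition beta33 := mx_of_seqs 2 6
  [:: [:: x; y; z ^+ 2; w ^+ 5; 0; 0];
      [:: 0; x; y * w; - (x * z ^+ 4) - y ^+ 5; w ^+ 6 + z ^+ 2 * y ^+ 4;
          z ^+ 6]].

Definition upper_half : pred 'I_6 := fun i => (3 <= i)%N.

Lemma upper_half_rev i : upper_half (rev_ord i) = ~~ upper_half i.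
Proof. by case: i => [[|[|[|[|[|[|//]]]]]] ?]. Qed.

Lemma is_morphism_beta42 :
  is_morphism [:: 3; 1; 1; -2; -2; -4] [:: 4; 2] beta42.
Proof.
move=> i j; case: i => [[|[|//]] ?]; case: j => [[|[|[|[|[|[|//]]]]]] ?];
  rewrite /homog_of_deg mxE /=; first [solve_homog | exact: eqxx].
Qed.

Lemma is_morphism_beta33 :
  is_morphism [:: 2; 2; 1; -2; -3; -3] [:: 3; 3] beta33.
Proof.
move=> i j; case: i => [[|[|//]] ?]; case: j => [[|[|[|[|[|[|//]]]]]] ?];
  rewrite /homog_of_deg mxE /=; first [solve_homog | exact: eqxx].
Qed.

Lemma rank_eval_beta42 v : nonzero_pt v -> \rank (eval_mx v beta42) = 2%N.
Proof.
case/nonzero_pt_cases=> [v0 | [v0 v1] | [v0 v1 v2] | [v0 v1 v2 v3]].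
- by rank2_by_minor 0%N 2%N (v 0 ^+ 2).
- by rank2_by_minor 2%N 1%N (v 1 ^+ 4).
- by rank2_by_minor 3%N 5%N (- v 2 ^+ 12).
- by rank2_by_minor 3%N 4%N (v 3 ^+ 10).
Qed.

Lemma rank_eval_beta33 v : nonzero_pt v -> \rank (eval_mx v beta33) = 2%N.
Proof.
case/nonzero_pt_cases=> [v0 | [v0 v1] | [v0 v1 v2] | [v0 v1 v2 v3]].
- by rank2_by_minor 0%N 1%N (v 0 ^+ 2).
- by rank2_by_minor 1%N 3%N (- v 1 ^+ 6).
- by rank2_by_minor 2%N 5%N (v 2 ^+ 8).
- by rank2_by_minor 3%N 4%N (v 3 ^+ 11).
Qed.

Lemma exists_minimal_monad42 :
  exists_minimal_monad k [:: -5; -3] [:: 3; 1; 1; -2; -2; -4] [:: 4; 2].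
Proof.
eapply exists_minimal_monad_sdual => //.
- exact: rev_ordK.
- exact: upper_half_rev.
- by case=> [[|[|[|[|[|[|//]]]]]] ?].
- exact: is_morphism_beta42.
- by rewrite !mxE !big_ord_recl big_ord0 !mxE /=; ring.
- exact: rank_eval_beta42.
Qed.

Lemma exists_minimal_monad33 :
  exists_minimal_monad k [:: -4; -4] [:: 2; 2; 1; -2; -3; -3] [:: 3; 3].
Proof.
eapply exists_minimal_monad_sdual => //.
- exact: rev_ordK.
- exact: upper_half_rev.
- by case=> [[|[|[|[|[|[|//]]]]]] ?].
- exact: is_morphism_beta33.
- by rewrite !mxE !big_ord_recl big_ord0 !mxE /=; ring.
- exact: rank_eval_beta33.
Qed.

End Examples.

Theorem proposition13 (k : closedFieldType) :
  exists_minimal_monad k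
    [:: (-5)%R; (-3)%R] [:: 3%R; 1%R; 1%R; (-2)%R; (-2)%R; (-4)%R] [:: 4%R; 2%R]
  /\
  exists_minimal_monad k
    [:: (-4)%R; (-4)%R] [:: 2%R; 2%R; 1%R; (-2)%R; (-3)%R; (-3)%R] [:: 3%R; 3%R].
Proof. by split; [exact: exists_minimal_monad42 | exact: exists_minimal_monad33].
Qed.
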